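(* For every $k\ge 2$, each $t_\ell(k)$ factors as $t_\ell(k)=p_\ell(k)\,s_\ell(k)$ where $s_\ell(k)$ is the longest Nyldon proper suffix of $t_\ell(k)$, with $(p_\ell(k),s_\ell(k))$ given by: $\ell=1$: $(t_3(k-1),t_9(k-1))$; $\ell=2$: $(t_3(k-1),t_{10}(k-1))$; $\ell=3$: $(t_3(k-1),t_{12}(k-1))$; $\ell=4$: $(t_3(k-1),t_4(k-1))$; $\ell=5$: $(t_3(k-1),t_8(k-1))$; $\ell=6$: $(t_5(k),t_9(k-1))$; $\ell=7$: $(t_5(k),t_{10}(k-1))$; $\ell=8$: $(t_5(k),t_{12}(k-1))$; $\ell=9$: $(t_2(k),t_6(k))$; $\ell=10$: $(t_2(k),t_7(k))$; $\ell=11$: $(t_8(k),t_6(k))$; $\ell=12$: $(t_1(k),t_{11}(k))$.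
   Context: Strings are over the binary alphabet $\{a,b\}$ ordered by $a \prec b$, and $\prec$ also denotes the induced lexicographic order on strings: $x \prec y$ iff $x$ is a proper prefix of $y$, or there is $i$ with $x[1..i-1]=y[1..i-1]$ and $x[i]\prec y[i]$; $x\preceq y$ means $x\prec y$ or $x=y$. Nyldon words are defined recursively: every string of length $1$ is a Nyldon word; a string $w$ with $|w|\ge 2$ is a Nyldon word iff there is no factorization $w=\gamma_1\cdots\gamma_m$ with $m\ge 2$, each $\gamma_i$ a nonempty Nyldon word, and $\gamma_1\preceq\gamma_2\preceq\cdots\preceq\gamma_m$. The longest Nyldon proper suffix of $w$ is the longest proper suffix of $w$ that is a Nyldon word. For a binary string $w$, $\overline{w}$ is obtained by exchanging $a$ and $b$ letterwise, and $w'$ is $w$ with its last letter removed; $\overline{w}'$ means $(\overline{w})'$. Thue–Morse words: $\mathit{TM}_0=a$ and $\mathit{TM}_k=\mathit{TM}_{k-1}\cdot\overline{\mathit{TM}_{k-1}}$ for $k\ge1$. For $k\ge1$ put $A=\mathit{TM}_{2k}$, $B=\overline{\mathit{TM}_{2k}}$ and define $t_1(k)=b\,A\,B'$, $t_2(k)=b\,A\,B$, $t_3(k)=b\,A\,B\,B'$, $t_4(k)=b\,A$, $t_5(k)=b\,A\,\mathit{TM}_{2k-1}\,\overline{\mathit{TM}_{2k-2}}'$, $t_6(k)=b\,A\,A\,B'$, $t_7(k)=b\,A\,A\,B$, $t_8(k)=b\,A\,A\,B\,B'$, $t_9(k)=b\,A\,B\,A\,A\,B'$, $t_{10}(k)=b\,A\,B\,A\,A\,B$,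 $t_{11}(k)=b\,A\,A\,B\,B\,A\,A\,B'$, $t_{12}(k)=b\,A\,B\,A\,A\,B\,B\,A\,A\,B'$ (with $A,B$ depending on the argument). *)

From mathcomp Require Import all_boot.
Set Implicit Arguments. Unset Strict Implicit. Unset Printing Implicit Defensive.

(* Binary alphabet {a,b} encoded as bool: a := false, b := true, a < b. *)
Notation word := (seq bool).
Definition la : bool := false.
Definition lb : bool := true.

Fixpoint lexlt (x y : word) : bool :=
  match x, y with
  | [::], [::] => false
  | [::], _ :: _ => true
  | _ :: _, [::] => false
  | c :: x', d :: y' => (~~ c && d) || ((c == d) && lexlt x' y')
  end.
Definition lexle (x y : word) : bool := (x == y) || lexlt x y.

(* Nyldon words, by the paper's recursive definition; [nyl n w] is the
   definition applied with recursion fuel n (meaningful when size w <= n). *)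
Fixpoint nyl (n : nat) (w : word) : Prop :=
  match n with
  | 0 => False
  | n'.+1 =>
      size w = 1 \/
      (2 <= size w /\
       ~ (exists gs : seq word,
            [/\ 2 <= size gs, all (fun g => g != [::]) gs, flatten gs = w,
                (forall g, g \in gs -> nyl n' g) & sorted lexle gs]))
  end.
Definition Nyldon (w : word) : Prop := nyl (size w) w.

Definition longest_nyldon_proper_suffix (w s : word) : Prop :=
  (exists p, p != [::] /\ w = p ++ s) /\ Nyldon s /\
  (forall p' s', p' != [::] -> w = p' ++ s' -> Nyldon s' -> size s' <= size s).

Definition lnps_fact (w p s : word) : Prop :=
  w = p ++ s /\ longest_nyldon_proper_suffix w s.

Definition compl (w : word) : word := map negb w.
Definition dropl (w : word) : word := take (size w).-1 w.

Fixpoint TM (k : nat) : word :=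
  match k with 0 => [:: la] | k'.+1 => TM k' ++ compl (TM k') end.

Definition tA k := TM (2 * k).
Definition tB k := compl (TM (2 * k)).

Definition t1 k := lb :: tA k ++ dropl (tB k).
Definition t2 k := lb :: tA k ++ tB k.
Definition t3 k := lb :: tA k ++ tB k ++ dropl (tB k).
Definition t4 k := lb :: tA k.
Definition t5 k := lb :: tA k ++ TM (2 * k - 1) ++ dropl (compl (TM (2 * k - 2))).
Definition t6 k := lb :: tA k ++ tA k ++ dropl (tB k).
Definition t7 k := lb :: tA k ++ tA k ++ tB k.
Definition t8 k := lb :: tA k ++ tA k ++ tB k ++ dropl (tB k).
Definition t9 k := lb :: tA k ++ tB k ++ tA k ++ tA k ++ dropl (tB k).
Definition t10 k := lb :: tA k ++ tB k ++ tA k ++ tA k ++ tB k.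
Definition t11 k := lb :: tA k ++ tA k ++ tB k ++ tB k ++ tA k ++ tA k ++ dropl (tB k).
Definition t12 k := lb :: tA k ++ tB k ++ tA k ++ tA k ++ tB k ++ tB k ++ tA k ++ tA k ++ dropl (tB k).

(* The right-to-left algorithm [nyl_fact] computes the unique factorization of a
   word into a lexicographically nondecreasing sequence of Nyldon words.  Hence w
   is Nyldon iff [nyl_fact w = [:: w]], and the last factor of [nyl_fact (behead w)]
   is the longest Nyldon proper suffix [lnps w].  This gives the basic gluing step:
   if u and s are Nyldon, s < u and lnps u <= s, then u s is Nyldon and s is its
   longest Nyldon proper suffix.

   With A = TM_2k and B its complement, A_(k+1) = A B B A and B_(k+1) = B A A B, so
   each t_l(k+1) is literally the product p_l s_l of the statement, built in three
   layers (prefix t3(k), then t5(k+1), then t1(k+1) or t8(k+1)).  The gluing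
   hypotheses are either comparisons between these words or the invariant that
   t3, t4, t8, t9, t10, t12 are Nyldon and dominate lnps t3; the invariant
   propagates from level k to k+1 and holds for k = 1 by computation. *)

From mathcomp Require Import all_boot zify.
Set Implicit Arguments. Unset Strict Implicit. Unset Printing Implicit Defensive.

Lemma lexlt_irr w : lexlt w w = false.
Proof. by elim: w => [|c w IH] //=; rewrite eqxx IH; case: c. Qed.

Lemma lexlt_trans x y z : lexlt x y -> lexlt y z -> lexlt x z.
Proof.
elim: x y z => [|c x IH] [|d y] [|e z] //=.
by case: c; case: d; case: e => //=; apply: IH.
Qed.

Lemma lexlt_total x y : x != y -> lexlt x y || lexlt y x.
Proof.
elim: x y => [|c x IH] [|d y] //=.
by rewrite eqseq_cons negb_and; case: c; case: d => //= /IH.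
Qed.

Lemma lexleNgt x y : lexle x y = ~~ lexlt y x.
Proof.
rewrite /lexle; have [->|neq] := eqVneq x y; first by rewrite lexlt_irr.
have := lexlt_total neq; case: (lexlt x y) (lexlt y x) (@lexlt_trans x y x) => [] [] //=.
by rewrite lexlt_irr => /(_ isT isT).
Qed.

Lemma lexltW x y : lexlt x y -> lexle x y.
Proof. by rewrite /lexle => ->; rewrite orbT. Qed.

Lemma lexlt_cat2l u v w : lexlt (u ++ v) (u ++ w) = lexlt v w.
Proof. by elim: u => [|c u IH] //=; rewrite eqxx IH; case: c. Qed.

Lemma lexlt_cons c v w : lexlt (c :: v) (c :: w) = lexlt v w.
Proof. exact: (lexlt_cat2l [:: c]). Qed.

Lemma lexlt_prefix u w : lexlt u (u ++ w) = (w != [::]).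
Proof. by rewrite -{1}(cats0 u) lexlt_cat2l; case: w. Qed.

Lemma lexlt_catr x y z : lexlt x y -> lexlt x (y ++ z).
Proof.
elim: x y => [|c x IH] [|d y] //= /orP[->//|/andP[-> /IH ->]].
by rewrite orbT.
Qed.

Definition nyldon_factorization (w : word) (F : seq word) :=
  [/\ flatten F = w, forall g, g \in F -> Nyldon g & sorted lexle F].

Lemma Nyldon_neq0 w : Nyldon w -> w != [::].
Proof. by case: w. Qed.

Lemma size_flatten_gt (g : word) F : g \in F -> 2 <= size F ->
  all (fun g : word => g != [::]) F -> size g < size (flatten F).
Proof.
case/splitPr: F / => F1 F2; rewrite size_cat /= all_cat /= flatten_cat /= !size_cat.
case: F1 F2 => [|[|c1 g1] F1] [|[|c2 g2] F2] //= *; rewrite ?size_cat /=; lia.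
Qed.

Lemma nyl_fuel n m w : size w <= n -> size w <= m -> nyl n w <-> nyl m w.
Proof.
elim: n m w => [|n IH] [|m] w //.
1,2: by case: w => // _ _; split=> // -[|[]].
move=> /= le_wn le_wm.
have parts_eq F : flatten F = w -> 2 <= size F -> all (fun g => g != [::]) F ->
    (forall g, g \in F -> nyl n g) <-> (forall g, g \in F -> nyl m g).
  move=> Fw F2 Fne; split=> P g gF; have := size_flatten_gt gF F2 Fne; rewrite Fw => lt;
  by apply/(IH m); [rewrite -ltnS (leq_trans lt le_wn)|rewrite -ltnS (leq_trans lt le_wm)|apply: P].
split=> -[->|[w2 noF]]; [by left|right|by left|right]; split=> // -[F [F2 Fne Fw P S]];
  apply: noF; exists F; split=> //; by apply/(parts_eq F Fw F2 Fne).
Qed.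

Lemma NyldonE w : Nyldon w <->
  size w = 1 \/ (2 <= size w /\ ~ exists F, 2 <= size F /\ nyldon_factorization w F).
Proof.
rewrite /Nyldon; case sw: (size w) => [|n] /=; first by split=> // -[|[]].
have parts_eq F : flatten F = w -> 2 <= size F -> all (fun g => g != [::]) F ->
    (forall g, g \in F -> nyl n g) <-> (forall g, g \in F -> Nyldon g).
  move=> Fw F2 Fne; split=> P g gF; have := size_flatten_gt gF F2 Fne; rewrite Fw sw => lt;
  by apply/(nyl_fuel (leqnn _) lt); apply: P.
have all_neq0 F : (forall g, g \in F -> Nyldon g) -> all (fun g => g != [::]) F.
  by move=> P; apply/allP => g /P /Nyldon_neq0.
rewrite sw; split=> -[w1|[w2 noF]]; [by left|right|by left|right]; split=> //.
  case=> F [F2 [Fw P S]]; apply: noF; exists F; split=> //; first exact: all_neq0.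
  by apply/(parts_eq F Fw F2 (all_neq0 F P)).
case=> F [F2 Fne Fw P S]; apply: noF; exists F; split=> //; split=> //.
by apply/(parts_eq F Fw F2 Fne).
Qed.

(* Prepending g to a factorization merges it with every following factor smaller
   than the current head; applied letter by letter from the right, this is the
   Nyldon factorization algorithm of Charlier, Philibert and Stipulanti. *)
Fixpoint nyl_cons (g : word) (F : seq word) : seq word :=
  match F with
  | [::] => [:: g]
  | f :: F' => if lexlt f g then nyl_cons (g ++ f) F' else g :: F
  end.

Fixpoint nyl_fact (w : word) : seq word :=
  if w is c :: u then nyl_cons [:: c] (nyl_fact u) else [::].

Lemma flatten_nyl_cons g F : flatten (nyl_cons g F) = g ++ flatten F.
Proof.
elim: F g => [|f F IH] g /=; first by rewrite !cats0.
by case: ifP => _ //=; rewrite IH catA.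
Qed.

Lemma flatten_nyl_fact w : flatten (nyl_fact w) = w.
Proof. by elim: w => [|c w IH] //=; rewrite flatten_nyl_cons IH. Qed.

Lemma sorted_nyl_cons g F : sorted lexle F -> sorted lexle (nyl_cons g F).
Proof.
elim: F g => [|f F IH] g //= sF; case: ifP => [_|lt_fg]; first exact/IH/(path_sorted sF).
by rewrite /= sF lexleNgt lt_fg.
Qed.

Lemma sorted_nyl_fact w : sorted lexle (nyl_fact w).
Proof. by elim: w => [|c w IH] //=; apply: sorted_nyl_cons. Qed.

Lemma nyl_cons_cat g h F1 F2 :
  nyl_cons g F1 = [:: h] -> nyl_cons g (F1 ++ F2) = nyl_cons h F2.
Proof.
elim: F1 g => [|f F1 IH] g /=; first by case=> ->.
by case: ifP => // _; apply: IH.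
Qed.

Lemma nyl_cons_split g F : exists F1 F2, [/\ F = F1 ++ F2,
  nyl_cons g F1 = [:: g ++ flatten F1] & nyl_cons g F = (g ++ flatten F1) :: F2].
Proof.
elim: F g => [|f F IH] g /=; first by exists [::], [::]; split; rewrite //= cats0.
case: ifP => lt_fg; last by exists [::], (f :: F); split; rewrite //= ?cats0.
have [F1 [F2 [-> eq1 eq2]]] := IH (g ++ f).
exists (f :: F1), F2; by split; rewrite //= ?lt_fg ?eq1 ?eq2 catA.
Qed.

Lemma nyl_cons_last g F h :
  nyl_cons g F = [:: h] -> F != [::] -> lexlt (last [::] F) h.
Proof.
elim: F g => [|f F IH] g //=; case: ifP => // lt_fg eq _.
case: F IH eq => [|f' F] IH /=; last by move/IH; apply.
by case=> <-; apply: lexlt_catr.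
Qed.

Lemma size_last_nyl_cons g F :
  size (last [::] F) <= size (last [::] (nyl_cons g F)).
Proof.
elim: F g => [|f F IH] g //=; case: ifP => _ //=.
by case: F IH => [|f' F] IH /=; [rewrite size_cat leq_addl|apply: IH].
Qed.

Lemma nyldon_factorization_nil F : nyldon_factorization [::] F -> F = [::].
Proof. by case: F => [|[|c g] F] // [] //= _ /(_ [::]); rewrite inE eqxx => /(_ isT). Qed.

Lemma sorted_cat_cons_last (A : seq word) x B : sorted lexle A ->
  (A != [::] -> lexle (last [::] A) x) -> sorted lexle (x :: B) ->
  sorted lexle (A ++ x :: B).
Proof.
case: A => [|a A] //= sA /(_ isT) le_x sB.
by rewrite cat_path sA /= le_x.
Qed.

Definition nyl_fact_spec w :=
  (forall g, g \in nyl_fact w -> Nyldon g) /\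
  (forall F, nyldon_factorization w F -> F = nyl_fact w).

Section NylFactCons.

Variables (c : bool) (u : word).
Hypothesis IH : forall v, size v <= size u -> nyl_fact_spec v.

Lemma Nyldon_in_nyl_fact_u g : g \in nyl_fact u -> Nyldon g.
Proof. exact: (IH (leqnn _)).1. Qed.

Lemma Nyldon_cons_flatten F1 F2 : nyl_fact u = F1 ++ F2 -> F2 != [::] ->
  nyl_cons [:: c] F1 = [:: c :: flatten F1] -> Nyldon (c :: flatten F1).
Proof.
move=> eqF F2n0 eq1.
have NF1 g : g \in F1 -> Nyldon g.
  by move=> gF1; apply: Nyldon_in_nyl_fact_u; rewrite eqF mem_cat gF1.
have lt_F1u : size (flatten F1) < size u.
  rewrite -(flatten_nyl_fact u) eqF flatten_cat size_cat -addn1 leq_add2l.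
  case: F2 F2n0 eqF => [|[|d f] F2] // _ eqF.
  by have := @Nyldon_in_nyl_fact_u [::]; rewrite eqF mem_cat inE eqxx orbT => /(_ isT).
have eqF1 : F1 = nyl_fact (flatten F1).
  apply: (IH (ltnW lt_F1u)).2; split=> //.
  by have := sorted_nyl_fact u; rewrite eqF => /cat_sorted2 [].
by apply: (@IH (c :: flatten F1) lt_F1u).1; rewrite /= -eqF1 eq1 inE.
Qed.

Lemma nyl_fact_cons_Nyldon : Nyldon (c :: u) -> nyl_fact (c :: u) = [:: c :: u].
Proof.
have [F1 [F2 [eqF eq1 eq2]]] := nyl_cons_split [:: c] (nyl_fact u).
case: F2 eqF eq2 => [|f F2] eqF eq2 /=.
  by rewrite eq2 -{2}(flatten_nyl_fact u) eqF cats0.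
case/NyldonE => [[/size0nil u0]|[_ []]]; first by move: eqF; rewrite u0; case: (F1).
exists (nyl_fact (c :: u)); rewrite /= eq2; split=> //; split.
- by rewrite -eq2 (flatten_nyl_fact (c :: u)).
- move=> g; rewrite inE => /orP[/eqP->|gF2].
    exact: Nyldon_cons_flatten eqF _ eq1.
  by apply: Nyldon_in_nyl_fact_u; rewrite eqF mem_cat gF2 orbT.
- by rewrite -eq2 (sorted_nyl_fact (c :: u)).
Qed.

Lemma nyl_fact_cons_unique F : nyldon_factorization (c :: u) F -> F = nyl_fact (c :: u).
Proof.
case: F => [|h [|h2 H]] [Fw NF sF] //.
  have hcu : h = c :: u by rewrite -Fw /= cats0.
  by rewrite hcu nyl_fact_cons_Nyldon // -hcu; apply: NF; rewrite inE.
have Nh : Nyldon h by apply: NF; rewrite inE eqxx.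
have Nh2 : Nyldon h2 by apply: NF; rewrite !inE eqxx orbT.
case: h Fw NF Nh sF => [|d h'] //= [-> eq_u] NF Nh sF.
have lt_h'u : size h' < size u.
  by rewrite -eq_u size_cat -addn1 leq_add2l; case: h2 Nh2 {NF sF eq_u} => // *; rewrite /= size_cat.
have fact_h : nyl_cons [:: c] (nyl_fact h') = [:: c :: h'].
  apply/esym/(@IH (c :: h') lt_h'u).2; split; rewrite //= ?cats0 //.
  by move=> g; rewrite inE => /eqP->.
have le_hh2 : lexle (c :: h') h2 by case/andP: sF.
have fact_u : nyl_fact u = nyl_fact h' ++ h2 :: H.
  apply/esym/(IH (leqnn _)).2; split.
  - by rewrite flatten_cat flatten_nyl_fact.
  - move=> g; rewrite mem_cat => /orP[|gH]; first exact: (IH (ltnW lt_h'u)).1.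
    by apply: NF; rewrite inE gH orbT.
  - apply: sorted_cat_cons_last; [exact: sorted_nyl_fact| |by case/andP: sF].
    move=> /(nyl_cons_last fact_h) lt_last; apply: lexltW.
    by move: le_hh2; rewrite /lexle => /orP[/eqP<-//|]; apply: lexlt_trans.
have ltNh2h : lexlt h2 (c :: h') = false by apply/negbTE; rewrite -lexleNgt.
by rewrite /= fact_u (nyl_cons_cat _ fact_h) /= ltNh2h.
Qed.

Lemma Nyldon_in_nyl_fact_cons g : g \in nyl_fact (c :: u) -> Nyldon g.
Proof.
have [F1 [F2 [eqF eq1 eq2]]] := nyl_cons_split [:: c] (nyl_fact u).
rewrite /= eq2 inE => /orP[/eqP->|gF2]; last first.
  by apply: Nyldon_in_nyl_fact_u; rewrite eqF mem_cat gF2 orbT.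
case: F2 eqF eq2 => [|f F2] eqF eq2; last exact: Nyldon_cons_flatten eqF _ eq1.
have flat_u : flatten F1 = u by rewrite -(flatten_nyl_fact u) eqF cats0.
apply/NyldonE; rewrite flat_u; have [->|u_neq0] := eqVneq u [::]; [by left|right].
split; first by rewrite /= ltnS lt0n size_eq0.
case=> F [F2 /nyl_fact_cons_unique eqF'].
by move: F2; rewrite eqF' /= eq2.
Qed.

End NylFactCons.

Lemma nyl_fact_correct w : nyl_fact_spec w.
Proof.
have [n] := ubnP (size w); elim: n w => // n IHn [|c u] /= lt_w_n.
  by split=> // F /nyldon_factorization_nil.
have IH v : size v <= size u -> nyl_fact_spec v.
  by move=> le_vu; apply: IHn; apply: leq_ltn_trans le_vu lt_w_n.
by split=> [g|F]; [apply: Nyldon_in_nyl_fact_cons | apply: nyl_fact_cons_unique].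
Qed.

Lemma Nyldon_in_nyl_fact w g : g \in nyl_fact w -> Nyldon g.
Proof. exact: (nyl_fact_correct w).1. Qed.

Lemma nyl_fact_unique w F : nyldon_factorization w F -> F = nyl_fact w.
Proof. exact: (nyl_fact_correct w).2. Qed.

Lemma nyl_fact_Nyldon w : Nyldon w -> nyl_fact w = [:: w].
Proof.
move=> Nw; apply/esym/nyl_fact_unique; split; rewrite /= ?cats0 //.
by move=> g; rewrite inE => /eqP->.
Qed.

Lemma Nyldon_nyl_fact1 w : nyl_fact w = [:: w] -> Nyldon w.
Proof. by move=> eq_w; apply: (@Nyldon_in_nyl_fact w); rewrite eq_w inE. Qed.

Lemma size_last_nyl_fact_cat z s :
  Nyldon s -> size s <= size (last [::] (nyl_fact (z ++ s))).
Proof.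
move=> Ns; elim: z => [|c z IH] /=; first by rewrite nyl_fact_Nyldon.
exact: leq_trans IH (size_last_nyl_cons _ _).
Qed.

Definition lnps (w : word) : word := last [::] (nyl_fact (behead w)).

Lemma lnps_correct w : 2 <= size w -> longest_nyldon_proper_suffix w (lnps w).
Proof.
case: w => [|c u] //=; rewrite ltnS lt0n size_eq0 /lnps /= => u_neq0.
case/lastP E: (nyl_fact u) => [|F s] /=.
  by move: u_neq0; rewrite -(flatten_nyl_fact u) E.
rewrite last_rcons; split; last split.
- by exists (c :: flatten F); rewrite -(flatten_nyl_fact u) E flatten_rcons.
- by apply: (@Nyldon_in_nyl_fact u); rewrite E mem_rcons inE eqxx.
- move=> [|d p] s' //= _ [_ eq_u] Ns'.
  by have := size_last_nyl_fact_cat p Ns'; rewrite -eq_u E last_rcons.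
Qed.

Lemma lnps_factE w u s : lnps_fact w u s -> lnps w = s.
Proof.
case=> _ [[p [p_neq0 eq_w]] [Ns max_s]].
have w2 : 2 <= size w.
  rewrite eq_w size_cat; case: p p_neq0 {eq_w} => // c p _.
  by case: s Ns {max_s} => [|d s] // _; rewrite addSn addnS.
have [[p' [p'_neq0 eq_w']] [Nl max_l]] := lnps_correct w2.
have size_s : size (lnps w) = size s.
  by apply/eqP; rewrite eqn_leq (max_s _ _ p'_neq0 eq_w' Nl) (max_l _ _ p_neq0 eq_w Ns).
have eq_ps : p' ++ lnps w = p ++ s by rewrite -eq_w'.
have size_p : size p' = size p.
  by move: (congr1 size eq_ps); rewrite !size_cat size_s => /addIn.
by move/eqP: eq_ps; rewrite eqseq_cat // => /andP[_ /eqP].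
Qed.

Lemma Nyldon_cat_lnps u s : Nyldon u -> Nyldon s -> lexle (lnps u) s -> lexlt s u ->
  Nyldon (u ++ s) /\ lnps_fact (u ++ s) u s.
Proof.
case: u => [|c p] // Nu Ns le_s lt_su.
have fact_ps : nyl_fact (p ++ s) = rcons (nyl_fact p) s.
  apply/esym/nyl_fact_unique; split.
  - by rewrite flatten_rcons flatten_nyl_fact.
  - by move=> g; rewrite mem_rcons inE => /orP[/eqP->//|/Nyldon_in_nyl_fact].
  - by rewrite -cats1 sorted_cat_cons_last //; exact: sorted_nyl_fact.
have lnps_us : lnps (c :: p ++ s) = s by rewrite /lnps /= fact_ps last_rcons.
split.
  apply: Nyldon_nyl_fact1.
  by rewrite /= fact_ps -cats1 (nyl_cons_cat _ (nyl_fact_Nyldon Nu)) /= lt_su.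
split=> //; rewrite -[in X in _ X]lnps_us; apply: lnps_correct.
by case: s Ns {le_s lt_su fact_ps lnps_us} => [|d s] //; rewrite /= size_cat addnS.
Qed.

Lemma complK : involutive compl.
Proof. exact: (mapK negbK). Qed.

Lemma compl_cat u v : compl (u ++ v) = compl u ++ compl v.
Proof. exact: map_cat. Qed.

Lemma dropl_rcons u c : dropl (u ++ [:: c]) = u.
Proof. by rewrite /dropl size_cat addn1 take_size_cat. Qed.

Lemma dropl_cat u v : v != [::] -> dropl (u ++ v) = u ++ dropl v.
Proof.
by case/lastP: v => [|v c] // _; rewrite -cats1 catA !dropl_rcons.
Qed.

Lemma TM_succ2 n : TM n.+2 = TM n ++ compl (TM n) ++ compl (TM n) ++ TM n.
Proof. by rewrite /= compl_cat complK -catA. Qed.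

Lemma tA_succ j : tA j.+1 = tA j ++ tB j ++ tB j ++ tA j.
Proof. by rewrite /tA /tB mulnS TM_succ2. Qed.

Lemma tB_succ j : tB j.+1 = tB j ++ tA j ++ tA j ++ tB j.
Proof. by rewrite [LHS]/tB -/(tA j.+1) tA_succ !compl_cat complK. Qed.

Lemma tA_cons j : exists x, tA j = la :: x.
Proof. by elim: j => [|j [x IH]]; [exists [::] | rewrite tA_succ IH; eexists]. Qed.

Lemma tB_rcons j : tB j = dropl (tB j) ++ [:: lb].
Proof.
suff [v tAv] : exists v, tA j = v ++ [:: la].
  by rewrite /tB -/(tA j) tAv compl_cat dropl_rcons.
by elim: j => [|j [v IH]]; [exists [::] | rewrite tA_succ {2}IH !catA; eexists].
Qed.

Lemma tB_neq0 j : tB j != [::].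
Proof. by rewrite tB_rcons; case: (dropl _). Qed.

Lemma dropl_tB_succ j : dropl (tB j.+1) = tB j ++ tA j ++ tA j ++ dropl (tB j).
Proof. by rewrite tB_succ !catA dropl_cat ?tB_neq0 // -!catA. Qed.

Lemma dropl_tB_cons j : 0 < j -> exists w, dropl (tB j) = lb :: w.
Proof.
case: j => [|j] // _; have [x tAx] := tA_cons j.
by rewrite dropl_tB_succ /tB -/(tA j) tAx; eexists.
Qed.

Lemma t5_succE j : t5 j.+1 = lb :: tA j.+1 ++ tA j ++ tB j ++ dropl (tB j).
Proof. by rewrite /t5 mulnS subn1 subn2 /= -catA. Qed.

Ltac unfold_t :=
  rewrite ?t5_succE /t1 /t2 /t3 /t4 /t6 /t7 /t8 /t9 /t10 /t11 /t12
    ?tA_succ ?dropl_tB_succ ?tB_succ.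

Ltac cat_norm := repeat (first [rewrite -!catA | progress rewrite /=]).

Ltac t_succ_solve j :=
  unfold_t; move: (tB_rcons j); move: (dropl (tB j)) => B' ->; cat_norm.

Lemma t1_succ j : t1 j.+1 = t3 j ++ t9 j.    Proof. by t_succ_solve j. Qed.
Lemma t2_succ j : t2 j.+1 = t3 j ++ t10 j.   Proof. by t_succ_solve j. Qed.
Lemma t3_succ j : t3 j.+1 = t3 j ++ t12 j.   Proof. by t_succ_solve j. Qed.
Lemma t4_succ j : t4 j.+1 = t3 j ++ t4 j.    Proof. by t_succ_solve j. Qed.
Lemma t5_succ j : t5 j.+1 = t3 j ++ t8 j.  Proof. by t_succ_solve j. Qed.
Lemma t6_succ j : t6 j.+1 = t5 j.+1 ++ t9 j.   Proof. by t_succ_solve j. Qed.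
Lemma t7_succ j : t7 j.+1 = t5 j.+1 ++ t10 j.  Proof. by t_succ_solve j. Qed.
Lemma t8_succ j : t8 j.+1 = t5 j.+1 ++ t12 j.  Proof. by t_succ_solve j. Qed.
Lemma t9_succ j : t9 j.+1 = t1 j.+1 ++ t6 j.+1.    Proof. by t_succ_solve j. Qed.
Lemma t10_succ j : t10 j.+1 = t1 j.+1 ++ t7 j.+1.  Proof. by t_succ_solve j. Qed.
Lemma t11_succ j : t11 j.+1 = t8 j.+1 ++ t6 j.+1.  Proof. by t_succ_solve j. Qed.
Lemma t12_succ j : t12 j.+1 = t1 j.+1 ++ t11 j.+1. Proof. by t_succ_solve j. Qed.

(* Writing A = a x and B' = b w (so B = b w b), every comparison below is decided
   by cancelling equal leading blocks until a letter a meets a letter b or one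
   side is a proper prefix of the other. *)
Ltac lexlt_solve j j_gt0 :=
  let x := fresh "x" in let w := fresh "w" in
  let tAx := fresh "tAx" in let tBw := fresh "tBw" in let tBw' := fresh "tBw" in
  have [x tAx] := tA_cons j; have [w tBw] := dropl_tB_cons j_gt0;
  (have tBw' : tB j = lb :: w ++ [:: lb] by rewrite {1}tB_rcons tBw);
  unfold_t; rewrite tBw tBw' tAx; cat_norm;
  repeat (rewrite lexlt_cons || rewrite (lexlt_cat2l x) || rewrite (lexlt_cat2l w)
          || rewrite (lexlt_prefix x) || rewrite (lexlt_prefix w));
  rewrite /=.

Lemma lexlt_t3_suffixes j : 0 < j ->
  all (lexlt^~ (t3 j)) [:: t4 j; t8 j; t9 j; t10 j; t12 j].
Proof. by move=> j_gt0; lexlt_solve j j_gt0. Qed.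

Lemma lexlt_t5_suffixes j : 0 < j ->
  all (fun s => lexlt (t8 j) s && lexlt s (t5 j.+1)) [:: t9 j; t10 j; t12 j].
Proof. by move=> j_gt0; lexlt_solve j j_gt0. Qed.

Lemma lexlt_top_suffixes j : 0 < j ->
  [&& lexlt (t9 j) (t6 j.+1), lexlt (t6 j.+1) (t1 j.+1),
      lexlt (t9 j) (t7 j.+1), lexlt (t7 j.+1) (t1 j.+1),
      lexlt (t12 j) (t6 j.+1), lexlt (t6 j.+1) (t8 j.+1),
      lexlt (t9 j) (t11 j.+1) & lexlt (t11 j.+1) (t1 j.+1)].
Proof. by move=> j_gt0; lexlt_solve j j_gt0. Qed.

Lemma lexlt_t12_next j : 0 < j ->
  all (lexlt (t12 j)) [:: t4 j.+1; t8 j.+1; t9 j.+1; t10 j.+1; t12 j.+1].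
Proof. by move=> j_gt0; lexlt_solve j j_gt0. Qed.

Definition level_inv j := Nyldon (t3 j) /\
  {in [:: t4 j; t8 j; t9 j; t10 j; t12 j], forall s, Nyldon s /\ lexle (lnps (t3 j)) s}.

Section Level.

Variable j : nat.
Hypotheses (j_gt0 : 0 < j) (inv : level_inv j).

Lemma Nyldon_t3_cat s : s \in [:: t4 j; t8 j; t9 j; t10 j; t12 j] ->
  Nyldon (t3 j ++ s) /\ lnps_fact (t3 j ++ s) (t3 j) s.
Proof.
move=> sS; have [Ns le_s] := inv.2 s sS.
by apply: Nyldon_cat_lnps inv.1 Ns le_s _; apply: (allP (lexlt_t3_suffixes j_gt0)).
Qed.

Lemma Nyldon_t5 : Nyldon (t5 j.+1) /\ lnps_fact (t5 j.+1) (t3 j) (t8 j).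
Proof. by rewrite t5_succ; apply: Nyldon_t3_cat; rewrite !inE eqxx orbT. Qed.

Lemma Nyldon_t5_cat s : s \in [:: t9 j; t10 j; t12 j] ->
  Nyldon (t5 j.+1 ++ s) /\ lnps_fact (t5 j.+1 ++ s) (t5 j.+1) s.
Proof.
move=> sS; have [N5 /lnps_factE lnps5] := Nyldon_t5.
have /andP[lt8s lts5] := allP (lexlt_t5_suffixes j_gt0) s sS.
have Ns : Nyldon s.
  by apply: (inv.2 s _).1; move: sS; rewrite !inE => /or3P[]->; rewrite ?orbT.
by apply: Nyldon_cat_lnps N5 Ns _ lts5; rewrite lnps5 lexltW.
Qed.

Lemma Nyldon_top :
  [/\ Nyldon (t9 j.+1) /\ lnps_fact (t9 j.+1) (t1 j.+1) (t6 j.+1),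
      Nyldon (t10 j.+1) /\ lnps_fact (t10 j.+1) (t1 j.+1) (t7 j.+1),
      Nyldon (t11 j.+1) /\ lnps_fact (t11 j.+1) (t8 j.+1) (t6 j.+1) &
      Nyldon (t12 j.+1) /\ lnps_fact (t12 j.+1) (t1 j.+1) (t11 j.+1)].
Proof.
have [N1 /lnps_factE lnps1] : Nyldon (t1 j.+1) /\ lnps_fact (t1 j.+1) (t3 j) (t9 j).
  by rewrite t1_succ; apply: Nyldon_t3_cat; rewrite !inE eqxx ?orbT.
have [N6 _] : Nyldon (t6 j.+1) /\ lnps_fact (t6 j.+1) (t5 j.+1) (t9 j).
  by rewrite t6_succ; apply: Nyldon_t5_cat; rewrite !inE eqxx ?orbT.
have [N7 _] : Nyldon (t7 j.+1) /\ lnps_fact (t7 j.+1) (t5 j.+1) (t10 j).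
  by rewrite t7_succ; apply: Nyldon_t5_cat; rewrite !inE eqxx ?orbT.
have [N8 /lnps_factE lnps8] : Nyldon (t8 j.+1) /\ lnps_fact (t8 j.+1) (t5 j.+1) (t12 j).
  by rewrite t8_succ; apply: Nyldon_t5_cat; rewrite !inE eqxx ?orbT.
have /and5P[lt9_6 lt6_1 lt9_7 lt7_1 /and4P[lt12_6 lt6_8 lt9_11 lt11_1]] :=
  lexlt_top_suffixes j_gt0.
have [N11 F11] : Nyldon (t11 j.+1) /\ lnps_fact (t11 j.+1) (t8 j.+1) (t6 j.+1).
  by rewrite t11_succ; apply: Nyldon_cat_lnps; rewrite ?lnps8 ?lexltW.
split; [rewrite t9_succ|rewrite t10_succ|by []|rewrite t12_succ];
  by apply: Nyldon_cat_lnps; rewrite ?lnps1 ?lexltW.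
Qed.

Lemma level_inv_succ : level_inv j.+1.
Proof.
have [N3 /lnps_factE lnps3] : Nyldon (t3 j.+1) /\ lnps_fact (t3 j.+1) (t3 j) (t12 j).
  by rewrite t3_succ; apply: Nyldon_t3_cat; rewrite !inE eqxx ?orbT.
have [N4 _] : Nyldon (t4 j.+1) /\ lnps_fact (t4 j.+1) (t3 j) (t4 j).
  by rewrite t4_succ; apply: Nyldon_t3_cat; rewrite !inE eqxx.
have [N8 _] : Nyldon (t8 j.+1) /\ lnps_fact (t8 j.+1) (t5 j.+1) (t12 j).
  by rewrite t8_succ; apply: Nyldon_t5_cat; rewrite !inE eqxx ?orbT.
have [[N9 _] [N10 _] _ [N12 _]] := Nyldon_top.
split=> // s sS; split; last by rewrite lnps3 lexltW ?(allP (lexlt_t12_next j_gt0)).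
by move: sS; rewrite !inE => /or4P[|||/orP[]] /eqP->.
Qed.

End Level.

Lemma level_inv1 : level_inv 1.
Proof.
split; first by apply: Nyldon_nyl_fact1; vm_compute.
move=> s; rewrite !inE => /or4P[|||/orP[]] /eqP->;
  by split; try apply: Nyldon_nyl_fact1; vm_compute.
Qed.

Lemma level_invP j : 0 < j -> level_inv j.
Proof.
elim: j => [|[|j] IH] // _; first exact: level_inv1.
exact: level_inv_succ (IH isT).
Qed.

Theorem mainTheorem9 (k : nat) : 2 <= k ->
     lnps_fact (t1 k) (t3 k.-1) (t9 k.-1) /\
      lnps_fact (t2 k) (t3 k.-1) (t10 k.-1) /\
      lnps_fact (t3 k) (t3 k.-1) (t12 k.-1) /\
      lnps_fact (t4 k) (t3 k.-1) (t4 k.-1) /\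
      lnps_fact (t5 k) (t3 k.-1) (t8 k.-1) /\
      lnps_fact (t6 k) (t5 k) (t9 k.-1) /\
      lnps_fact (t7 k) (t5 k) (t10 k.-1) /\
      lnps_fact (t8 k) (t5 k) (t12 k.-1) /\
      lnps_fact (t9 k) (t1 k) (t6 k) /\
      lnps_fact (t10 k) (t1 k) (t7 k) /\
      lnps_fact (t11 k) (t8 k) (t6 k) /\
      lnps_fact (t12 k) (t1 k) (t11 k).
Proof.
case: k => [|[|j]] // _; have j_gt0 : 0 < j.+1 by [].
have inv := level_invP j_gt0.
have t3_cat s := fun sS => (@Nyldon_t3_cat _ j_gt0 inv s sS).2.
have t5_cat s := fun sS => (@Nyldon_t5_cat _ j_gt0 inv s sS).2.
have [[_ F9] [_ F10] [_ F11] [_ F12]] := Nyldon_top j_gt0 inv.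
split; first by rewrite t1_succ; apply: t3_cat; rewrite !inE eqxx ?orbT.
split; first by rewrite t2_succ; apply: t3_cat; rewrite !inE eqxx ?orbT.
split; first by rewrite t3_succ; apply: t3_cat; rewrite !inE eqxx ?orbT.
split; first by rewrite t4_succ; apply: t3_cat; rewrite !inE eqxx ?orbT.
split; first by rewrite t5_succ; apply: t3_cat; rewrite !inE eqxx ?orbT.
split; first by rewrite t6_succ; apply: t5_cat; rewrite !inE eqxx ?orbT.
split; first by rewrite t7_succ; apply: t5_cat; rewrite !inE eqxx ?orbT.
split; first by rewrite t8_succ; apply: t5_cat; rewrite !inE eqxx ?orbT.
by [].
Qed.
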